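(* Let $0\le\alpha\le1$ and let $f,g$ be infinitely differentiable functions (on a domain containing $[0,\infty)$ and the range of $g$ respectively) with $f(g(0))=0$, such that all series below converge absolutely and may be rearranged. For real $\beta$ define $$D_x^{\beta}[h](x)=\sum_{k=0}^{\infty}\frac{\sin[\pi(\beta-k)]}{\pi(\beta-k)}\,\frac{\Gamma(\beta+1)}{\Gamma(k+1)}\,x^{k-\beta}\,\frac{d^k}{dx^k}\big[h(x)-h(0)\big],\qquad x>0,$$ with $\frac{\sin[\pi(\beta-k)]}{\pi(\beta-k)}:=1$ when $\beta=k$. For each integer $m\ge0$ define the differential operator (normal-ordered hypergeometric function) $$:{}_2F_2:\left[\begin{matrix}1,\ m-\alpha\\ 1+m,\ 1+m-\alpha\end{matrix};-x\frac{d}{dx}\right]:=\sum_{k=0}^{\infty}\frac{(1)_k\,(m-\alpha)_k}{(1+m)_k\,(1+m-\alpha)_k\,k!}\,(-1)^k\,x^k\frac{d^k}{dx^k},$$ where $(a)_k$ is the Pochhammer symbol, and the weight $$W_m(\alpha,x,g(x))=\sum_{j=0}^{m}\frac{(-1)^j}{m!}\binom{m}{j}\,g(x)^j\;:{}_2F_2:\left[\begin{matrix}1,\ m-\alpha\\ 1+m,\ 1+m-\alpha\end{matrix};-x\frac{d}{dx}\right]\frac{d^m}{dx^m}\big(g(x)^{m-j}\big),$$ where the operator acts only on $\frac{d^m}{dx^m}(g(x)^{m-j})$. Then for $x>0$, $$D_x^{\alpha}[f(g(x))]=\sum_{m=0}^{\infty}W_m(\alpha,x,g(x))\,\frac{\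sin[\pi(\alpha-m)]}{\pi(\alpha-m)}\,\frac{\Gamma(\alpha+1)}{\Gamma(m+1)}\,x^{m-\alpha}\,f^{(m)}(g(x)).$$
   Context: For $0\le\alpha\le1$ the series operator $D_x^\alpha$ is the expansion the paper uses for the Caputo fractional derivative ${}^C D_x^\alpha f(x)=\frac{1}{\Gamma(1-\alpha)}\int_0^x (x-t)^{-\alpha} f'(t)\,dt$, $x>0$. The paper adopts the convention of replacing every function $h$ by $h(x)-h(0)$, i.e. functions being differentiated are taken to vanish at the origin. *)

From Stdlib Require Import Reals Factorial Binomial.
From Coquelicot Require Import Coquelicot.
Open Scope R_scope.

Definition Gamma (s : R) : R :=
  RInt_gen (fun t => Rpower t (s - 1) * exp (- t)) (at_right 0) (Rbar_locally p_infty).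

Definition sincpi (t : R) : R :=
  if Req_EM_T t 0 then 1 else sin (PI * t) / (PI * t).

Definition Dfrac_term (beta : R) (h : R -> R) (x : R) (k : nat) : R :=
  sincpi (beta - INR k) * Gamma (beta + 1) / Gamma (INR k + 1)
  * Rpower x (INR k - beta) * Derive_n (fun y => h y - h 0) k x.

Definition Dfrac (beta : R) (h : R -> R) (x : R) : R := Series (Dfrac_term beta h x).

Fixpoint poch (a : R) (k : nat) : R :=
  match k with
  | O => 1
  | S k' => poch a k' * (a + INR k')
  end.

Definition F22_term (alpha : R) (m : nat) (u : R -> R) (x : R) (k : nat) : R :=
  poch 1 k * poch (INR m - alpha) k
  / (poch (1 + INR m) k * poch (1 + INR m - alpha) k * INR (fact k))
  * (-1) ^ k * x ^ k * Derive_n u k x.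

Definition F22op (alpha : R) (m : nat) (u : R -> R) (x : R) : R :=
  Series (F22_term alpha m u x).

Definition dm_gpow (g : R -> R) (m j : nat) : R -> R :=
  Derive_n (fun y => g y ^ (m - j)) m.

Definition W (alpha : R) (g : R -> R) (m : nat) (x : R) : R :=
  sum_f_R0 (fun j => (-1) ^ j / INR (fact m) * Binomial.C m j * g x ^ j
                     * F22op alpha m (dm_gpow g m j) x) m.

Definition rhs_term (alpha : R) (f g : R -> R) (x : R) (m : nat) : R :=
  W alpha g m x * sincpi (alpha - INR m) * Gamma (alpha + 1) / Gamma (INR m + 1)
  * Rpower x (INR m - alpha) * Derive_n f m (g x).

(* (m,k)-th term of the right-hand side with the operator series expanded;
   rhs_term m = sum_k rhs_term2 m k (when the inner series converge). *)
Definition rhs_term2 (alpha : R) (f g : R -> R) (x : R) (m k : nat) : R :=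
  sum_f_R0 (fun j => (-1) ^ j / INR (fact m) * Binomial.C m j * g x ^ j
                     * F22_term alpha m (dm_gpow g m j) x k) m
  * sincpi (alpha - INR m) * Gamma (alpha + 1) / Gamma (INR m + 1)
  * Rpower x (INR m - alpha) * Derive_n f m (g x).

From Stdlib Require Import Reals Lra Lia Factorial Binomial.
From Coquelicot Require Import Coquelicot.
Open Scope R_scope.

(* Faa di Bruno's formula (f o g)^(K) = sum_(m <= K) f^(m)(g) B_{K,m}, with the partial Bell
   polynomial in the closed form B_{K,m} = (1/m!) sum_j (-1)^j C(m,j) g^j (g^(m-j))^(K), splits
   the K-th term of D_x^alpha[f(g(x))] into K + 1 terms. Writing K = m + n, the (m, n) term is
   the n-th term of the operator series in W_m times the m-th coefficient of the right-hand side: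
   as (m-alpha)_n / (1+m-alpha)_n = (m-alpha) / (m+n-alpha) and sin(pi (alpha - j)) =
   (-1)^j sin(pi alpha), the :2F2: coefficient times sincpi(alpha-m) x^(m-alpha) / m! is
   sincpi(alpha-m-n) x^(m+n-alpha) / (m+n)!  (for m = 0 only n = 0 matters, since B_{n,0} = 0
   for n > 0). So the left-hand side sums a double series along antidiagonals, its row sums
   are the terms of the right-hand side, and absolute summability allows the rearrangement. *)

Definition smooth_upto (n : nat) (h : R -> R) : Prop :=
  forall k y, (k <= n)%nat -> 0 < y -> ex_derive_n h k y.

Lemma smooth_upto_0 (h : R -> R) : smooth_upto 0 h.
Proof. intros k y Hk _. replace k with 0%nat by lia. exact I. Qed.

Lemma smooth_upto_le (n p : nat) (h : R -> R) :
  (p <= n)%nat -> smooth_upto n h -> smooth_upto p h.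
Proof. intros Hpn H k y Hk. apply H. lia. Qed.

Lemma smooth_upto_ex_derive (n : nat) (h : R -> R) (y : R) :
  smooth_upto (S n) h -> 0 < y -> ex_derive h y.
Proof. intros H Hy. exact (H 1%nat y ltac:(lia) Hy). Qed.

Lemma Derive_n_Derive (h : R -> R) (k : nat) (y : R) :
  Derive_n (Derive h) k y = Derive_n h (S k) y.
Proof. rewrite (Derive_n_comp h k 1), Nat.add_1_r. reflexivity. Qed.

Lemma smooth_upto_Derive (n : nat) (h : R -> R) :
  smooth_upto (S n) h -> smooth_upto n (Derive h).
Proof.
  intros H [|k] y Hk Hy; [exact I|].
  apply (ex_derive_ext (Derive_n h (S k))); [intros; symmetry; apply Derive_n_Derive|].
  exact (H (S (S k)) y ltac:(lia) Hy).
Qed.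

Lemma smooth_upto_step (n : nat) (h h' : R -> R) :
  (forall y, 0 < y -> is_derive h y (h' y)) -> smooth_upto n h' -> smooth_upto (S n) h.
Proof.
  intros Hd H [|[|k]] y Hk Hy; [exact I | eexists; exact (Hd y Hy)|].
  apply (ex_derive_ext (Derive_n (Derive h) k)); [intros; apply Derive_n_Derive|].
  apply (ex_derive_n_ext_loc h' (Derive h) (S k)); [|exact (H (S k) y ltac:(lia) Hy)].
  apply (filter_imp (fun t => 0 < t)); [|exact (open_gt 0 y Hy)].
  intros t Ht. symmetry. apply is_derive_unique, Hd, Ht.
Qed.

Lemma smooth_upto_const (n : nat) (c : R) : smooth_upto n (fun _ => c).
Proof.
  revert c; induction n as [|n IH]; intros c; [apply smooth_upto_0|].
  apply (smooth_upto_step n _ (fun _ => 0)); [intros; apply (is_derive_const c) | apply IH].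
Qed.

Lemma smooth_upto_plus (n : nat) (h1 h2 : R -> R) :
  smooth_upto n h1 -> smooth_upto n h2 -> smooth_upto n (fun y => h1 y + h2 y).
Proof.
  revert h1 h2; induction n as [|n IH]; intros h1 h2 H1 H2; [apply smooth_upto_0|].
  apply (smooth_upto_step n _ (fun y => Derive h1 y + Derive h2 y)).
  - intros y Hy. apply (is_derive_plus h1 h2); apply Derive_correct;
      [exact (smooth_upto_ex_derive n h1 y H1 Hy) | exact (smooth_upto_ex_derive n h2 y H2 Hy)].
  - apply IH; apply smooth_upto_Derive; assumption.
Qed.

Lemma smooth_upto_mult (n : nat) (h1 h2 : R -> R) :
  smooth_upto n h1 -> smooth_upto n h2 -> smooth_upto n (fun y => h1 y * h2 y).
Proof.
  revert h1 h2; induction n as [|n IH]; intros h1 h2 H1 H2; [apply smooth_upto_0|].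
  apply (smooth_upto_step n _ (fun y => Derive h1 y * h2 y + h1 y * Derive h2 y)).
  - intros y Hy. apply (is_derive_mult h1 h2); [| |intros; apply Rmult_comm];
      apply Derive_correct; [exact (smooth_upto_ex_derive n h1 y H1 Hy)
                            | exact (smooth_upto_ex_derive n h2 y H2 Hy)].
  - assert (H1' := smooth_upto_le (S n) n h1 (le_S _ _ (le_n n)) H1).
    assert (H2' := smooth_upto_le (S n) n h2 (le_S _ _ (le_n n)) H2).
    apply smooth_upto_plus; apply IH; auto using smooth_upto_Derive.
Qed.

Lemma ex_derive_n_pow (g : R -> R) (p : nat) :
  (forall n y, 0 < y -> ex_derive_n g n y) ->
  forall n y, 0 < y -> ex_derive_n (fun z => g z ^ p) n y.
Proof.
  intros Hg n y Hy.
  assert (Hpow : smooth_upto n (fun z => g z ^ p)).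
  { induction p as [|p IH]; [exact (smooth_upto_const n 1)|].
    apply smooth_upto_mult; [intros k t _ Ht; apply Hg, Ht | exact IH]. }
  exact (Hpow n y (le_n n) Hy).
Qed.

(** * Faa di Bruno's formula *)

Lemma is_derive_sum_f_R0 (h : nat -> R -> R) (d : nat -> R) (n : nat) (y : R) :
  (forall i, (i <= n)%nat -> is_derive (h i) y (d i)) ->
  is_derive (fun z => sum_f_R0 (fun i => h i z) n) y (sum_f_R0 d n).
Proof.
  intros H. rewrite <- sum_n_Reals.
  apply (is_derive_ext (fun z => sum_n (fun i => h i z) n)); [intros; apply sum_n_Reals|].
  apply (is_derive_sum_n h), H.
Qed.

Lemma is_derive_zero_pos (h : R -> R) (y l : R) : 0 < y ->
  (forall t, 0 < t -> h t = 0) -> is_derive h y l -> l = 0.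
Proof.
  intros Hy H0 Hd. apply is_derive_unique in Hd. rewrite <- Hd.
  apply is_derive_unique, (is_derive_ext_loc (fun _ => 0)); [|apply (is_derive_const 0)].
  apply (filter_imp (fun t => 0 < t)); [|exact (open_gt 0 y Hy)].
  intros t Ht. symmetry. apply H0, Ht.
Qed.

Lemma binom_succ_mul_div_fact (m i : nat) : (i <= m)%nat ->
  Binomial.C (S m) (S i) * INR (S i) / INR (fact (S m)) = Binomial.C m i / INR (fact m).
Proof.
  intros Hi. unfold Binomial.C.
  replace (S m - S i)%nat with (m - i)%nat by lia.
  rewrite (fact_simpl i), (fact_simpl m), !mult_INR.
  pose proof (INR_fact_neq_0 i). pose proof (INR_fact_neq_0 m).
  pose proof (INR_fact_neq_0 (m - i)). pose proof (pos_INR m). pose proof (pos_INR i).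
  rewrite !S_INR. field. repeat split; lra.
Qed.

Lemma sum_f_R0_telescope (w : nat -> R) (n : nat) :
  sum_f_R0 (fun m => w (S m) - w m) n = w (S n) - w 0%nat.
Proof. induction n as [|n IH]; cbn [sum_f_R0]; [|rewrite IH]; ring. Qed.

Section FaaDiBruno.

Variables f g : R -> R.
Hypothesis g_smooth : forall n y, 0 < y -> ex_derive_n g n y.
Hypothesis f_smooth : forall n y, 0 < y -> ex_derive_n f n (g y).

(* The partial Bell polynomial [B_{k,m}(g', g'', ...)] at [y], in closed form: it is the
   [k]-th derivative of [(g z - g y)^m / m!] at [z = y], expanded binomially. *)
Definition bell (k m : nat) (y : R) : R :=
  sum_f_R0 (fun j => (-1) ^ j / INR (fact m) * Binomial.C m j * g y ^ j
                     * Derive_n (fun z => g z ^ (m - j)) k y) m.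

Definition bell_pred (k m : nat) (y : R) : R :=
  match m with O => 0 | S m' => bell k m' y end.

Lemma bell_lower_sum (k m : nat) (y : R) :
  sum_f_R0 (fun j => (-1) ^ j / INR (fact m) * Binomial.C m j * (INR j * g y ^ pred j)
                     * Derive_n (fun z => g z ^ (m - j)) k y) m
  = - bell_pred k m y.
Proof.
  destruct m as [|m]; [simpl; ring|].
  cbn [bell_pred]. rewrite <- (Rmult_1_l (bell k m y)), Ropp_mult_distr_l.
  unfold bell. rewrite scal_sum, decomp_sum, INR_0 by lia.
  rewrite Rmult_0_l, Rmult_0_r, Rmult_0_l, Rplus_0_l.
  apply sum_eq. intros i Hi. simpl pred.
  change (S m - S i)%nat with (m - i)%nat.
  transitivity (- (-1) ^ i * (Binomial.C (S m) (S i) * INR (S i) / INR (fact (S m)))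
                * g y ^ i * Derive_n (fun z => g z ^ (m - i)) k y).
  - simpl pow. unfold Rdiv. ring.
  - rewrite binom_succ_mul_div_fact by exact Hi. unfold Rdiv. ring.
Qed.

Lemma is_derive_bell (k m : nat) (y : R) : 0 < y ->
  is_derive (bell k m) y (bell (S k) m y - Derive g y * bell_pred k m y).
Proof.
  intros Hy.
  assert (Hg' : is_derive g y (Derive g y)) by (apply Derive_correct, (g_smooth 1), Hy).
  replace (bell (S k) m y - Derive g y * bell_pred k m y) with
    (sum_f_R0 (fun j =>
       (-1) ^ j / INR (fact m) * Binomial.C m j * (INR j * Derive g y * g y ^ pred j)
         * Derive_n (fun z => g z ^ (m - j)) k y
       + (-1) ^ j / INR (fact m) * Binomial.C m j * g y ^ j
         * Derive_n (fun z => g z ^ (m - j)) (S k) y) m).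
  2:{ rewrite plus_sum, Rplus_comm. unfold Rminus.
      rewrite Ropp_mult_distr_r, <- (bell_lower_sum k m y), scal_sum. unfold bell.
      f_equal; apply sum_eq; intros; ring. }
  apply is_derive_sum_f_R0. intros j Hj.
  apply (is_derive_mult (fun z => (-1) ^ j / INR (fact m) * Binomial.C m j * g z ^ j));
    [| |intros; apply Rmult_comm].
  - apply is_derive_scal, is_derive_pow, Hg'.
  - apply Derive_correct, ex_derive_n_pow with (n := S k); assumption.
Qed.

Lemma bell_0 (m : nat) (y : R) : (0 < m)%nat -> bell 0 m y = 0.
Proof.
  intros Hm.
  transitivity (/ INR (fact m) * (- g y + g y) ^ m).
  - rewrite binomial, scal_sum. apply sum_eq. intros j _.
    replace (- g y) with (-1 * g y) by ring. rewrite Rpow_mult_distr.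
    cbn [Derive_n]. unfold Rdiv. ring.
  - rewrite Rplus_opp_l, pow_i by exact Hm. ring.
Qed.

Lemma bell_lt (k m : nat) (y : R) : (k < m)%nat -> 0 < y -> bell k m y = 0.
Proof.
  revert m y; induction k as [|k IH]; intros m y Hkm Hy; [exact (bell_0 m y Hkm)|].
  destruct m as [|m]; [lia|].
  assert (Hd := is_derive_bell k (S m) y Hy).
  apply is_derive_zero_pos in Hd; [|exact Hy | intros t Ht; apply IH; [lia | exact Ht]].
  cbn [bell_pred] in Hd. rewrite (IH m y) in Hd by (lia || exact Hy). lra.
Qed.

Lemma bell_succ_diag (k : nat) (y : R) : 0 < y ->
  bell (S k) (S k) y = Derive g y * bell k k y.
Proof.
  intros Hy. assert (Hd := is_derive_bell k (S k) y Hy).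
  apply is_derive_zero_pos in Hd; [|exact Hy | intros t Ht; apply bell_lt; [lia | exact Ht]].
  cbn [bell_pred] in Hd. lra.
Qed.

Lemma bell_succ_0 (k : nat) (y : R) : bell (S k) 0 y = 0.
Proof.
  unfold bell. cbn [sum_f_R0].
  rewrite (Derive_n_ext _ (fun _ => 1)), Derive_n_const by reflexivity. ring.
Qed.

Lemma is_derive_Derive_n_comp (m : nat) (y : R) : 0 < y ->
  is_derive (fun z => Derive_n f m (g z)) y (Derive_n f (S m) (g y) * Derive g y).
Proof.
  intros Hy. rewrite Rmult_comm.
  apply (is_derive_comp (Derive_n f m) g); apply Derive_correct;
    [apply (f_smooth (S m)) | apply (g_smooth 1)]; exact Hy.
Qed.

Theorem faa_di_bruno (K : nat) (y : R) : 0 < y ->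
  Derive_n (fun z => f (g z)) K y = sum_f_R0 (fun m => Derive_n f m (g y) * bell K m y) K.
Proof.
  revert y; induction K as [|K IH]; intros y Hy.
  - unfold bell. simpl. unfold Binomial.C. simpl. field.
  - cbn [Derive_n]. apply is_derive_unique.
    apply (is_derive_ext_loc (fun z => sum_f_R0 (fun m => Derive_n f m (g z) * bell K m z) K)).
    { apply (filter_imp (fun t => 0 < t)); [|exact (open_gt 0 y Hy)].
      intros t Ht. symmetry. apply IH, Ht. }
    (* chain-rule terms and [B_{K,m-1}] terms pair up into a telescoping sum *)
    set (w := fun m => Derive_n f m (g y) * Derive g y * bell_pred K m y).
    replace (sum_f_R0 (fun m => Derive_n f m (g y) * bell (S K) m y) (S K)) with
      (sum_f_R0 (fun m => Derive_n f (S m) (g y) * Derive g y * bell K m y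
         + Derive_n f m (g y) * (bell (S K) m y - Derive g y * bell_pred K m y)) K).
    + apply is_derive_sum_f_R0. intros m _.
      apply (is_derive_mult (fun z => Derive_n f m (g z)) (bell K m));
        [apply is_derive_Derive_n_comp, Hy | apply is_derive_bell, Hy | intros; apply Rmult_comm].
    + transitivity (sum_f_R0 (fun m => (w (S m) - w m) + Derive_n f m (g y) * bell (S K) m y) K).
      { apply sum_eq. intros m _. unfold w. cbn [bell_pred]. ring. }
      rewrite plus_sum, sum_f_R0_telescope, tech5, bell_succ_diag by exact Hy.
      unfold w. cbn [bell_pred]. ring.
Qed.

End FaaDiBruno.

(** * Summing a double series along antidiagonals *)

Lemma sum_antidiag (a : nat -> nat -> R) (N : nat) :
  sum_f_R0 (fun K => sum_f_R0 (fun m => a m (K - m)%nat) K) N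
  = sum_f_R0 (fun m => sum_f_R0 (a m) (N - m)) N.
Proof.
  induction N as [|N IH]; [reflexivity|].
  rewrite tech5, IH, !tech5, Nat.sub_diag, <- Rplus_assoc, <- plus_sum. f_equal.
  apply sum_eq. intros m Hm. replace (S N - m)%nat with (S (N - m)) by lia. reflexivity.
Qed.

Lemma Un_cv_uniform_upto (u : nat -> nat -> R) (eps : R) (M : nat) :
  (forall m, Un_cv (u m) 0) -> 0 < eps ->
  exists P, forall m p, (m <= M)%nat -> (P <= p)%nat -> Rabs (u m p) < eps.
Proof.
  intros Hu Heps. induction M as [|M [P IH]].
  - destruct (Hu 0%nat eps Heps) as [P HP]. exists P. intros m p Hm Hp.
    replace m with 0%nat by lia. specialize (HP p Hp). unfold R_dist in HP.
    rewrite Rminus_0_r in HP. exact HP.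
  - destruct (Hu (S M) eps Heps) as [P' HP']. exists (P + P')%nat. intros m p Hm Hp.
    destruct (Nat.eq_dec m (S M)) as [->|Hne]; [|apply IH; lia].
    specialize (HP' p ltac:(lia)). unfold R_dist in HP'. rewrite Rminus_0_r in HP'. exact HP'.
Qed.

(* Tannery's theorem for the antidiagonal sums of a dominated double sequence. *)
Lemma Un_cv_sum_antidiag_0 (r : nat -> nat -> R) (B : nat -> R) (TB : R) :
  (forall m p, 0 <= r m p <= B m) -> infinite_sum B TB -> (forall m, Un_cv (r m) 0) ->
  Un_cv (fun N => sum_f_R0 (fun m => r m (N - m)%nat) N) 0.
Proof.
  intros Hr HB Hcv eps Heps.
  assert (HB0 : forall m, 0 <= B m) by (intros m; destruct (Hr m 0%nat); lra).
  destruct (HB (eps / 2) ltac:(lra)) as [M HM].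
  set (delta := eps / 2 / INR (S M)).
  assert (HSM : 0 < INR (S M)) by (apply lt_0_INR; lia).
  assert (Hdelta : 0 < delta) by (apply Rdiv_lt_0_compat; lra).
  destruct (Un_cv_uniform_upto r delta M Hcv Hdelta) as [P HP].
  exists (S M + P)%nat. intros N HN. unfold R_dist.
  rewrite Rminus_0_r, Rabs_pos_eq by (apply cond_pos_sum; intros; apply Hr).
  rewrite (tech2 _ M N) by lia.
  assert (Hhead : sum_f_R0 (fun m => r m (N - m)%nat) M <= eps / 2).
  { apply Rle_trans with (sum_f_R0 (fun _ => delta) M).
    - apply sum_Rle. intros m Hm. specialize (HP m (N - m)%nat Hm ltac:(lia)).
      rewrite Rabs_pos_eq in HP by apply Hr. lra.
    - rewrite sum_cte. unfold delta. right. field. lra. }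
  assert (Htail : sum_f_R0 (fun i => r (S M + i)%nat (N - (S M + i))%nat) (N - S M)
                  < eps / 2).
  { apply Rle_lt_trans with (sum_f_R0 (fun i => B (S M + i)%nat) (N - S M)).
    - apply sum_Rle. intros i _. apply Hr.
    - pose proof (tech2 B M N ltac:(lia)). pose proof (sum_incr B N TB HB HB0).
      specialize (HM M (le_n M)). unfold R_dist in HM. apply Rabs_def2 in HM. lra. }
  lra.
Qed.

Lemma is_series_antidiag (a : nat -> nat -> R) (A : nat -> R) (l : R) :
  (forall m, is_series (a m) (A m)) ->
  (forall m, ex_series (fun k => Rabs (a m k))) ->
  ex_series (fun m => Series (fun k => Rabs (a m k))) ->
  is_series A l ->
  is_series (fun K => sum_f_R0 (fun m => a m (K - m)%nat) K) l.
Proof.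
  intros HA Habs HB HSA.
  set (B := fun m => Series (fun k => Rabs (a m k))).
  set (r := fun m p => B m - sum_f_R0 (fun k => Rabs (a m k)) p).
  assert (HBm : forall m, infinite_sum (fun k => Rabs (a m k)) (B m))
    by (intros m; apply is_series_Reals, Series_correct, Habs).
  assert (Hr : forall m p, 0 <= r m p <= B m).
  { intros m p. unfold r. split.
    - pose proof (sum_incr _ p _ (HBm m) (fun k => Rabs_pos (a m k))). lra.
    - pose proof (cond_pos_sum _ p (fun k => Rabs_pos (a m k))). lra. }
  assert (Hcv : forall m, Un_cv (r m) 0).
  { intros m eps Heps. destruct (HBm m eps Heps) as [P HP]. exists P. intros p Hp.
    specialize (HP p Hp). unfold R_dist, r in *. rewrite Rminus_0_r, Rabs_minus_sym.
    exact HP. }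
  assert (Hrow : forall m p, Rabs (A m - sum_f_R0 (a m) p) <= r m p).
  { intros m p. apply (sum_maj1 (fun k _ => a m k) (fun k => Rabs (a m k)) 0);
      [apply is_series_Reals, HA | apply HBm | intros; apply Rle_refl]. }
  pose proof (Un_cv_sum_antidiag_0 r B _ Hr (proj1 (is_series_Reals _ _) (Series_correct _ HB))
                Hcv) as Htann.
  apply is_series_Reals. apply is_series_Reals in HSA.
  intros eps Heps.
  destruct (HSA (eps / 2) ltac:(lra)) as [N1 HN1].
  destruct (Htann (eps / 2) ltac:(lra)) as [N2 HN2].
  exists (N1 + N2)%nat. intros N HN.
  specialize (HN1 N ltac:(lia)). specialize (HN2 N ltac:(lia)).
  unfold R_dist in *. rewrite Rminus_0_r in HN2.
  rewrite sum_antidiag.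
  replace (sum_f_R0 (fun m => sum_f_R0 (a m) (N - m)) N - l) with
    ((sum_f_R0 A N - l) - sum_f_R0 (fun m => A m - sum_f_R0 (a m) (N - m)) N)
    by (rewrite minus_sum; ring).
  eapply Rle_lt_trans; [apply Rabs_triang|]. rewrite Rabs_Ropp.
  assert (sum_f_R0 (fun m => r m (N - m)%nat) N <= Rabs (sum_f_R0 (fun m => r m (N - m)%nat) N))
    by apply RRle_abs.
  assert (Rabs (sum_f_R0 (fun m => A m - sum_f_R0 (a m) (N - m)) N)
          <= sum_f_R0 (fun m => r m (N - m)%nat) N).
  { eapply Rle_trans; [apply Rsum_abs|]. apply sum_Rle. intros; apply Hrow. }
  lra.
Qed.

(** * The coefficient shift identity *)

Lemma poch_1 (n : nat) : poch 1 n = INR (fact n).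
Proof.
  induction n as [|n IH]; [reflexivity|].
  cbn [poch]. rewrite IH, fact_simpl, mult_INR, S_INR. ring.
Qed.

Lemma poch_succ_mul_fact (m n : nat) :
  poch (1 + INR m) n * INR (fact m) = INR (fact (m + n)).
Proof.
  induction n as [|n IH]; cbn [poch].
  - rewrite Nat.add_0_r. ring.
  - rewrite Nat.add_succ_r, fact_simpl, mult_INR, <- IH, S_INR, plus_INR. ring.
Qed.

Lemma poch_mul_last (c : R) (n : nat) : poch c n * (c + INR n) = c * poch (c + 1) n.
Proof.
  induction n as [|n IH]; cbn [poch].
  - simpl. ring.
  - rewrite S_INR, <- Rmult_assoc, IH. ring.
Qed.

Lemma poch_gt0 (c : R) (n : nat) : 0 < c -> 0 < poch c n.
Proof.
  intros Hc. induction n as [|n IH]; cbn [poch]; [lra|].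
  apply Rmult_lt_0_compat; [exact IH | pose proof (pos_INR n); lra].
Qed.

Lemma poch_0 (n : nat) : poch 0 (S n) = 0.
Proof. induction n as [|n IH]; cbn [poch] in *; [simpl; ring | rewrite IH; ring]. Qed.

Lemma sin_PI_mul_sub_nat (a : R) (j : nat) : sin (PI * (a - INR j)) = (-1) ^ j * sin (PI * a).
Proof.
  induction j as [|j IH].
  - simpl. rewrite Rminus_0_r. ring.
  - rewrite S_INR. replace (PI * (a - (INR j + 1))) with (PI * (a - INR j) - PI) by ring.
    rewrite sin_minus, sin_PI, cos_PI, IH. simpl. ring.
Qed.

Lemma sincpi_sub_nat (a : R) (j : nat) : a <> INR j ->
  sincpi (a - INR j) = (-1) ^ j * sin (PI * a) / (PI * (a - INR j)).
Proof.
  intros Ha. unfold sincpi. destruct (Req_EM_T (a - INR j) 0) as [H0|_]; [lra|].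
  now rewrite sin_PI_mul_sub_nat.
Qed.

Lemma poch_ratio_mul_sincpi (alpha : R) (m n : nat) : 0 <= alpha <= 1 -> (0 < m)%nat ->
  poch (INR m - alpha) n / poch (1 + INR m - alpha) n * (-1) ^ n * sincpi (alpha - INR m)
  = sincpi (alpha - INR (m + n)).
Proof.
  intros Ha Hm.
  assert (Hm1 : 1 <= INR m) by (apply (le_INR 1); lia).
  destruct n as [|n].
  { rewrite Nat.add_0_r. cbn [poch pow]. field. }
  assert (Hn0 := pos_INR n).
  assert (HK : INR m + 1 <= INR (m + S n)) by (rewrite plus_INR, S_INR; lra).
  rewrite (sincpi_sub_nat alpha (m + S n)) by lra.
  destruct (Req_dec alpha (INR m)) as [Ham|Ham].
  - (* only for alpha = m = 1, where (0)_n vanishes *)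
    replace (INR m - alpha) with 0 by lra. replace alpha with 1 by lra.
    rewrite poch_0, Rmult_1_r, sin_PI. unfold Rdiv. ring.
  - assert (Hpoch : 0 < poch (1 + INR m - alpha) (S n)) by (apply poch_gt0; lra).
    assert (Hlast := poch_mul_last (INR m - alpha) (S n)).
    replace (INR m - alpha + 1) with (1 + INR m - alpha) in Hlast by ring.
    replace (poch (INR m - alpha) (S n)) with
      ((INR m - alpha) * poch (1 + INR m - alpha) (S n) / (INR m - alpha + INR (S n)))
      by (rewrite <- Hlast; field; rewrite S_INR; lra).
    rewrite sincpi_sub_nat, pow_add, plus_INR by exact Ham.
    rewrite S_INR in *. pose proof PI_neq0.
    field. repeat split; lra.
Qed.

Definition F22_coef (alpha : R) (m : nat) (x : R) (n : nat) : R :=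
  poch 1 n * poch (INR m - alpha) n
  / (poch (1 + INR m) n * poch (1 + INR m - alpha) n * INR (fact n))
  * (-1) ^ n * x ^ n.

(* The [K]-th coefficient of [D_x^alpha] without its factor [Gamma (alpha + 1)], and with
   [Gamma (K + 1)] evaluated as [K!]. *)
Definition frac_coef (alpha x : R) (K : nat) : R :=
  sincpi (alpha - INR K) / INR (fact K) * Rpower x (INR K - alpha).

Lemma Rpower_add_nat (x a : R) (n : nat) : 0 < x ->
  Rpower x (a + INR n) = x ^ n * Rpower x a.
Proof. intros Hx. rewrite Rpower_plus, Rpower_pow by exact Hx. ring. Qed.

Lemma F22_coef_mul_frac_coef (alpha x : R) (m n : nat) :
  0 <= alpha <= 1 -> 0 < x -> (n = 0 \/ 0 < m)%nat ->
  F22_coef alpha m x n * frac_coef alpha x m = frac_coef alpha x (m + n).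
Proof.
  intros Ha Hx [->|Hm].
  { unfold F22_coef, frac_coef. rewrite Nat.add_0_r. cbn [poch pow fact INR]. field.
    apply INR_fact_neq_0. }
  unfold F22_coef, frac_coef.
  rewrite <- (poch_ratio_mul_sincpi alpha m n), poch_1, <- poch_succ_mul_fact by assumption.
  replace (INR (m + n) - alpha) with ((INR m - alpha) + INR n) by (rewrite plus_INR; ring).
  rewrite Rpower_add_nat by exact Hx.
  assert (Hm1 : 1 <= INR m) by (apply (le_INR 1); lia).
  assert (0 < poch (1 + INR m) n) by (apply poch_gt0; lra).
  assert (0 < poch (1 + INR m - alpha) n) by (apply poch_gt0; lra).
  pose proof (INR_fact_neq_0 n). pose proof (INR_fact_neq_0 m).
  field. repeat split; lra.
Qed.

(** * The Gamma function at the integers *)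

Lemma pow_mul_exp_opp_le (k : nat) (t : R) : 0 < t ->
  t ^ k * exp (- t) <= INR (fact (S k)) / t.
Proof.
  intros Ht.
  assert (Hfact : 0 < INR (fact (S k))) by apply INR_fact_lt_0.
  assert (Htaylor : t ^ S k / INR (fact (S k)) <= exp t).
  { eapply Rle_trans; [| apply (exp_ge_taylor t (S k)); lra].
    rewrite tech5. assert (0 <= sum_f_R0 (fun j => t ^ j / INR (fact j)) k); [|lra].
    apply cond_pos_sum. intros j. apply Rdiv_le_0_compat;
      [apply pow_le; lra | apply INR_fact_lt_0]. }
  assert (Hexp : exp (- t) * exp t = 1) by (rewrite <- exp_plus, Rplus_opp_l; apply exp_0).
  pose proof (exp_pos t).
  apply Rmult_le_reg_r with (t * exp t); [apply Rmult_lt_0_compat; lra|].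
  replace (t ^ k * exp (- t) * (t * exp t)) with (t ^ S k * (exp (- t) * exp t)) by (simpl; ring).
  rewrite Hexp, Rmult_1_r.
  replace (INR (fact (S k)) / t * (t * exp t)) with (INR (fact (S k)) * exp t) by (field; lra).
  apply Rmult_le_reg_r with (/ INR (fact (S k))); [apply Rinv_0_lt_compat; lra|].
  replace (INR (fact (S k)) * exp t * / INR (fact (S k))) with (exp t) by (field; lra).
  exact Htaylor.
Qed.

Lemma is_lim_pow_mul_exp_opp (k : nat) :
  is_lim (fun t => t ^ k * exp (- t)) p_infty 0.
Proof.
  apply (is_lim_le_le_loc (fun _ => 0) (fun t => INR (fact (S k)) / t)).
  - exists 0. intros t Ht. split.
    + apply Rmult_le_pos; [apply pow_le; lra | apply Rlt_le, exp_pos].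
    + apply pow_mul_exp_opp_le; lra.
  - apply is_lim_const.
  - apply (is_lim_ext (fun t => INR (fact (S k)) * / t)); [reflexivity|].
    replace (Finite 0) with (Rbar_mult (INR (fact (S k))) (Rbar_inv p_infty))
      by (simpl; f_equal; ring).
    apply is_lim_scal_l, is_lim_inv; [apply is_lim_id | discriminate].
Qed.

(* [gamma_poly n t = n! * sum_(j <= n) t^j / j!], so that [- gamma_poly n t * exp (- t)]
   is an antiderivative of [t^n * exp (- t)]. *)
Fixpoint gamma_poly (n : nat) (t : R) : R :=
  match n with
  | O => 1
  | S k => t ^ S k + INR (S k) * gamma_poly k t
  end.

Lemma is_derive_gamma_poly (n : nat) (t : R) :
  is_derive (gamma_poly n) t (gamma_poly n t - t ^ n).
Proof.
  induction n as [|k IH]; cbn [gamma_poly].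
  - replace (1 - t ^ 0) with 0 by (simpl; ring). apply (is_derive_const 1).
  - replace (t ^ S k + INR (S k) * gamma_poly k t - t ^ S k)
      with (INR (S k) * 1 * t ^ pred (S k) + INR (S k) * (gamma_poly k t - t ^ k))
      by (simpl; ring).
    apply (is_derive_plus (fun y => y ^ S k) (fun y => INR (S k) * gamma_poly k y)).
    + apply is_derive_pow, (is_derive_id t).
    + apply is_derive_scal, IH.
Qed.

Lemma gamma_poly_0 (n : nat) : gamma_poly n 0 = INR (fact n).
Proof.
  induction n as [|k IH]; [reflexivity|].
  cbn [gamma_poly]. rewrite IH, fact_simpl, mult_INR. simpl. ring.
Qed.

Lemma is_lim_gamma_poly_mul_exp_opp (n : nat) :
  is_lim (fun t => gamma_poly n t * exp (- t)) p_infty 0.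
Proof.
  induction n as [|k IH]; cbn [gamma_poly].
  - apply (is_lim_ext (fun t => t ^ 0 * exp (- t))); [reflexivity|].
    apply is_lim_pow_mul_exp_opp.
  - apply (is_lim_ext (fun t => t ^ S k * exp (- t) + INR (S k) * (gamma_poly k t * exp (- t)))).
    { intros t. ring. }
    replace 0 with (0 + INR (S k) * 0) by ring.
    apply is_lim_plus'; [apply is_lim_pow_mul_exp_opp | apply (is_lim_scal_l _ _ _ 0), IH].
Qed.

Lemma Gamma_nat (n : nat) : Gamma (INR n + 1) = INR (fact n).
Proof.
  set (F := fun t => - (gamma_poly n t * exp (- t))).
  assert (HF : forall t, is_derive F t (t ^ n * exp (- t))).
  { intros t. unfold F.
    replace (t ^ n * exp (- t)) with
      (- ((gamma_poly n t - t ^ n) * exp (- t) + gamma_poly n t * (- exp (- t)))) by ring.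
    apply (is_derive_opp (fun s => gamma_poly n s * exp (- s))),
      (is_derive_mult (gamma_poly n) (fun s => exp (- s))).
    - apply is_derive_gamma_poly.
    - auto_derive; [exact I | ring].
    - intros; apply Rmult_comm. }
  assert (HDF : forall t, Derive F t = t ^ n * exp (- t)) by (intros; apply is_derive_unique, HF).
  unfold Gamma. apply is_RInt_gen_unique.
  apply (is_RInt_gen_ext (Derive F)).
  - apply (Filter_prod _ _ _ (fun a => 0 < a) (fun b => 0 < b)).
    + exists (mkposreal 1 Rlt_0_1). intros y _ Hy. exact Hy.
    + exists 0. intros; assumption.
    + intros a b Ha Hb t [Ht _]. simpl in Ht.
      assert (0 < t) by (apply Rlt_trans with (Rmin a b); [apply Rmin_glb_lt|]; assumption).
      rewrite HDF, <- Rpower_pow by assumption. do 3 f_equal. ring.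
  - replace (INR (fact n)) with (0 - F 0)
      by (unfold F; rewrite gamma_poly_0, Ropp_0, exp_0; ring).
    apply is_RInt_gen_Derive.
    + apply filter_forall. intros ab t _. eexists. apply HF.
    + apply filter_forall. intros ab t _.
      apply (continuous_ext (fun s => s ^ n * exp (- s))); [intros; symmetry; apply HDF|].
      apply (@ex_derive_continuous R_AbsRing R_NormedModule). auto_derive. exact I.
    + apply (filterlim_filter_le_1 _ (filter_le_within _)).
      apply (@ex_derive_continuous R_AbsRing R_NormedModule). eexists. apply HF.
    + replace 0 with (- 0) by ring.
      apply (is_lim_opp (fun t => gamma_poly n t * exp (- t)) p_infty 0).
      apply is_lim_gamma_poly_mul_exp_opp.
Qed.

Lemma F22_term_eq (alpha : R) (m : nat) (u : R -> R) (x : R) (k : nat) :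
  F22_term alpha m u x k = F22_coef alpha m x k * Derive_n u k x.
Proof. reflexivity. Qed.

Lemma rhs_term2_eq (alpha : R) (f g : R -> R) (x : R) (m n : nat) :
  rhs_term2 alpha f g x m n
  = Gamma (alpha + 1) * Derive_n f m (g x)
    * (F22_coef alpha m x n * frac_coef alpha x m) * bell g (m + n) m x.
Proof.
  assert (Hinner :
    sum_f_R0 (fun j => (-1) ^ j / INR (fact m) * Binomial.C m j * g x ^ j
                       * F22_term alpha m (dm_gpow g m j) x n) m
    = F22_coef alpha m x n * bell g (m + n) m x).
  { unfold bell. rewrite scal_sum. apply sum_eq. intros j _. rewrite F22_term_eq. unfold dm_gpow.
    rewrite Derive_n_comp, Nat.add_comm. ring. }
  unfold rhs_term2, frac_coef. rewrite Hinner, Gamma_nat. unfold Rdiv. ring.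
Qed.

Lemma Dfrac_term_eq (alpha : R) (f g : R -> R) (x : R) (K : nat) :
  (forall n y, 0 < y -> ex_derive_n g n y) ->
  (forall n y, 0 < y -> ex_derive_n f n (g y)) ->
  f (g 0) = 0 -> 0 < x ->
  Dfrac_term alpha (fun y => f (g y)) x K
  = Gamma (alpha + 1) * frac_coef alpha x K
    * sum_f_R0 (fun m => Derive_n f m (g x) * bell g K m x) K.
Proof.
  intros Hg Hf Hfg0 Hx. unfold Dfrac_term, frac_coef.
  rewrite (Derive_n_ext _ (fun y => f (g y))) by (intros; rewrite Hfg0; ring).
  rewrite faa_di_bruno, Gamma_nat by assumption. unfold Rdiv. ring.
Qed.

Lemma Dfrac_term_antidiag (alpha : R) (f g : R -> R) (x : R) (K : nat) :
  0 <= alpha <= 1 ->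
  (forall n y, 0 < y -> ex_derive_n g n y) ->
  (forall n y, 0 < y -> ex_derive_n f n (g y)) ->
  f (g 0) = 0 -> 0 < x ->
  Dfrac_term alpha (fun y => f (g y)) x K
  = sum_f_R0 (fun m => rhs_term2 alpha f g x m (K - m)) K.
Proof.
  intros Ha Hg Hf Hfg0 Hx.
  rewrite Dfrac_term_eq, scal_sum by assumption.
  apply sum_eq. intros m Hm.
  rewrite rhs_term2_eq. replace (m + (K - m))%nat with K by lia.
  assert (Hcases : (K - m = 0 \/ 0 < m)%nat \/ (m = 0 /\ 0 < K)%nat) by lia.
  destruct Hcases as [Hcoef | [-> HK]].
  - rewrite F22_coef_mul_frac_coef by assumption.
    replace (m + (K - m))%nat with K by lia. ring.
  - destruct K as [|K]; [lia|]. rewrite bell_succ_0. ring.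
Qed.

Lemma is_series_sum_f_R0 (u : nat -> nat -> R) (U : nat -> R) (n : nat) :
  (forall j, (j <= n)%nat -> is_series (u j) (U j)) ->
  is_series (fun k => sum_f_R0 (fun j => u j k) n) (sum_f_R0 U n).
Proof.
  induction n as [|n IH]; intros H; [apply H; lia|].
  apply (is_series_plus (V := R_NormedModule)); [apply IH; intros; apply H|apply H]; lia.
Qed.

Lemma is_series_rhs_term2 (alpha : R) (f g : R -> R) (x : R) (m : nat) :
  (forall j, (j <= m)%nat ->
     ex_series (fun k => Rabs (F22_term alpha m (dm_gpow g m j) x k))) ->
  is_series (rhs_term2 alpha f g x m) (rhs_term alpha f g x m).
Proof.
  intros HF22.
  set (c := sincpi (alpha - INR m) * Gamma (alpha + 1) / Gamma (INR m + 1)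
            * Rpower x (INR m - alpha) * Derive_n f m (g x)).
  apply (is_series_ext (V := R_NormedModule) (fun k => sum_f_R0 (fun j =>
           F22_term alpha m (dm_gpow g m j) x k
           * ((-1) ^ j / INR (fact m) * Binomial.C m j * g x ^ j)) m * c)).
  { intros k. change (?a = ?b) with (@eq R a b). unfold rhs_term2, c.
    rewrite (sum_eq _ (fun j => (-1) ^ j / INR (fact m) * Binomial.C m j * g x ^ j
                                * F22_term alpha m (dm_gpow g m j) x k)) by (intros; ring).
    unfold Rdiv. ring. }
  replace (rhs_term alpha f g x m) with (W alpha g m x * c)
    by (unfold rhs_term, c; unfold Rdiv; ring).
  apply is_series_scal_r, is_series_sum_f_R0. intros j Hj.
  replace (_ * F22op alpha m (dm_gpow g m j) x) with
    (F22op alpha m (dm_gpow g m j) x * ((-1) ^ j / INR (fact m) * Binomial.C m j * g x ^ j))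
    by ring.
  apply is_series_scal_r, Series_correct, ex_series_Rabs, HF22, Hj.
Qed.

Theorem mainTheorem2 (alpha : R) (f g : R -> R) (x : R) :
  0 <= alpha <= 1 ->
  (* g infinitely differentiable on (0, oo), f infinitely differentiable on g((0,oo)) *)
  (forall (n : nat) (y : R), 0 < y -> ex_derive_n g n y) ->
  (forall (n : nat) (y : R), 0 < y -> ex_derive_n f n (g y)) ->
  f (g 0) = 0 ->
  0 < x ->
  (* all series converge absolutely ... *)
  ex_series (fun k => Rabs (Dfrac_term alpha (fun y => f (g y)) x k)) ->
  (forall m j : nat, (j <= m)%nat ->
     ex_series (fun k => Rabs (F22_term alpha m (dm_gpow g m j) x k))) ->
  ex_series (fun m => Rabs (rhs_term alpha f g x m)) ->
  (* ... and may be rearranged: the expanded double series is absolutely summable *)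
  (forall m : nat, ex_series (fun k => Rabs (rhs_term2 alpha f g x m k))) ->
  ex_series (fun m => Series (fun k => Rabs (rhs_term2 alpha f g x m k))) ->
  Dfrac alpha (fun y => f (g y)) x = Series (rhs_term alpha f g x).
Proof.
  intros Ha Hg Hf Hfg0 Hx _ HF22 Hrhs Hrow Hcol.
  unfold Dfrac. apply is_series_unique.
  apply (is_series_ext (V := R_NormedModule)
           (fun K => sum_f_R0 (fun m => rhs_term2 alpha f g x m (K - m)) K)).
  { intros K. symmetry. apply Dfrac_term_antidiag; assumption. }
  apply (is_series_antidiag _ (rhs_term alpha f g x)); [|exact Hrow | exact Hcol |].
  - intros m. apply is_series_rhs_term2. intros j. apply HF22.
  - apply Series_correct, ex_series_Rabs, Hrhs.
Qed.
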